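(* Let $\phi_C(t)=1/\cosh t$ (the hyperbolic-cosine characteristic function), whose Khintchine pair is $[0,m_C]$ with $m_C(dx)=\frac12\frac{|x|}{1+x^2}\frac{1}{\sinh(\pi|x|/2)}dx$. Its free analogue $\tilde\phi_C$ has Voiculescu transform $$V_{\tilde\phi_C}(it)=-it^2\int_0^\infty\log\cosh(s)\,e^{-ts}ds=i\big[1-t\beta(t/2)\big]=i\big[t\beta(t/2+1)-1\big],\qquad t>0.$$ Consequently, $\beta(s)+\beta(s+1)=1/s$ for all $s>0$.
   Context: $\beta(x):=\sum_{k=0}^\infty\frac{(-1)^k}{x+k}=\frac12[\psi(\frac{x+1}{2})-\psi(\frac x2)]$ for $x>0$, where $\psi=\Gamma'/\Gamma$ is the digamma function. For an infinitely divisible characteristic function $\phi$ with Khintchine exponent $\log\phi$, its free analogue $\tilde\phi$ is the $\boxplus$-infinitely divisible probability measure whose Voiculescu transform satisfies $V_{\tilde\phi}(it)=it^2\int_0^\infty\overline{\log\phi(s)}e^{-ts}ds$, $t>0$; if $\phi$ has Khintchine pair $[0,m]$ with $m$ symmetric, this equals $-it\int_{\mathbb{R}}\frac{1+x^2}{t^2+x^2}m(dx)$. *)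

From Stdlib Require Import Reals Lra ClassicalEpsilon.
Open Scope R_scope.

Definition beta_term (x : R) (k : nat) : R := (-1) ^ k / (x + INR k).

(* beta(x) := the sum of the series (chosen classically; for x > 0 the
   series converges, so this is its unique sum). *)
Definition beta (x : R) : R :=
  epsilon (inhabits 0) (fun l => infinite_sum (beta_term x) l).

Definition improper_integral_0_inf (f : R -> R) (l : R) : Prop :=
  exists pr : forall b : R, Riemann_integrable f 0 b,
    forall eps : R, eps > 0 ->
      exists B : R, forall b : R, b >= B -> Rabs (RiemannInt (pr b) - l) < eps.

(* Let f x be twice int_0^oo e^{-2xs}/(1+e^{-2s}) ds.  The integrands for x and x+1
   add up to e^{-2xs}, so f x + f (x+1) = 1/x, and 0 <= f x <= 1/x.  Telescoping the
   alternating series of beta(x) against this recurrence leaves f x up to a remainder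
   of size 1/(x+n+1), so f = beta on (0, oo); in particular beta satisfies the same
   recurrence.  Integrating ln(cosh s) e^{-ts} by parts, with
   (ln cosh)' = tanh = 1 - 2e^{-2s}/(1+e^{-2s}) and e^{-ts} e^{-2s} = e^{-2(t/2+1)s},
   gives boundary terms vanishing at oo, the term 1/t^2 and -(1/t) f (t/2+1). *)

From Stdlib Require Import Reals Lra Lia ClassicalEpsilon.
From Coquelicot Require Import Coquelicot.
Open Scope R_scope.

Lemma inv_shift_cv0 (x : R) : 0 < x -> Un_cv (fun n => / (x + INR n)) 0.
Proof.
  intros hx eps heps.
  destruct (archimed_cor1 eps heps) as [N [HN HN_pos]].
  exists N; intros n hn.
  assert (HNn : INR N <= INR n) by (apply le_INR; lia).
  assert (0 < INR N) by (apply lt_0_INR; lia).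
  unfold Rdist; rewrite Rminus_0_r, Rabs_right
    by (apply Rle_ge, Rlt_le, Rinv_0_lt_compat; lra).
  apply Rle_lt_trans with (/ INR N); [apply Rinv_le_contravar|]; lra.
Qed.

Lemma sum_beta_term_telescope (f : R -> R) (x : R) :
  0 < x -> (forall y, 0 < y -> f y + f (y + 1) = 1 / y) ->
  forall n, sum_f_R0 (beta_term x) n = f x - (-1) ^ S n * f (x + INR (S n)).
Proof.
  intros hx hf n; induction n as [|n IH].
  - unfold beta_term; cbn; rewrite Rplus_0_r, <- (hf x hx); field; lra.
  - cbn [sum_f_R0]; rewrite IH.
    assert (hxn : 0 < x + INR (S n)) by (pose proof (pos_INR (S n)); lra).
    assert (hnext := hf _ hxn).
    rewrite (S_INR (S n)), <- Rplus_assoc.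
    replace (f (x + INR (S n) + 1)) with (1 / (x + INR (S n)) - f (x + INR (S n)))
      by lra.
    unfold beta_term; cbn [pow]; field; lra.
Qed.

Lemma beta_unique (f : R -> R) (x : R) :
  0 < x -> (forall y, 0 < y -> f y + f (y + 1) = 1 / y) ->
  (forall y, 0 < y -> Rabs (f y) <= 1 / y) -> beta x = f x.
Proof.
  intros hx hrec hbound.
  assert (Hsum : infinite_sum (beta_term x) (f x)).
  { intros eps heps.
    destruct (inv_shift_cv0 x hx eps heps) as [N HN].
    exists N; intros n hn.
    specialize (HN (S n) ltac:(lia)); unfold Rdist in *.
    rewrite Rminus_0_r in HN.
    assert (hxn : 0 < x + INR (S n)) by (pose proof (pos_INR (S n)); lra).
    rewrite (sum_beta_term_telescope f x hx hrec n).
    replace (f x - (-1) ^ S n * f (x + INR (S n)) - f x)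
      with (- ((-1) ^ S n * f (x + INR (S n)))) by ring.
    rewrite Rabs_Ropp, Rabs_mult, pow_1_abs, Rmult_1_l.
    rewrite Rabs_right in HN by (apply Rle_ge, Rlt_le, Rinv_0_lt_compat; lra).
    eapply Rle_lt_trans; [apply (hbound _ hxn)|].
    unfold Rdiv; rewrite Rmult_1_l; exact HN. }
  apply (uniqueness_sum (beta_term x)); [|exact Hsum].
  unfold beta; apply epsilon_spec; exists (f x); exact Hsum.
Qed.

Definition beta_kernel (x s : R) : R := exp (- (2 * x * s)) / (1 + exp (- (2 * s))).

Lemma beta_kernel_shift (x s : R) :
  beta_kernel x s + beta_kernel (x + 1) s = exp (- (2 * x * s)).
Proof.
  unfold beta_kernel.
  replace (- (2 * (x + 1) * s)) with (- (2 * x * s) + - (2 * s)) by ring.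
  rewrite exp_plus; pose proof (exp_pos (- (2 * s))); field; lra.
Qed.

Lemma beta_kernel_mul_exp (x y s : R) :
  exp (- (2 * y * s)) * beta_kernel x s = beta_kernel (y + x) s.
Proof.
  unfold beta_kernel, Rdiv; rewrite <- Rmult_assoc, <- exp_plus.
  do 2 f_equal; ring.
Qed.

Lemma beta_kernel_bounds (x s : R) : 0 <= beta_kernel x s <= exp (- (2 * x * s)).
Proof.
  unfold beta_kernel.
  pose proof (exp_pos (- (2 * x * s))); pose proof (exp_pos (- (2 * s))).
  split; [apply Rlt_le, Rdiv_lt_0_compat; lra|].
  apply Rmult_le_reg_r with (1 + exp (- (2 * s))); [lra|].
  unfold Rdiv; rewrite Rmult_assoc, Rinv_l by lra; nra.
Qed.

Lemma continuous_beta_kernel (x s : R) : continuous (beta_kernel x) s.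
Proof.
  apply (ex_derive_continuous (beta_kernel x)); unfold beta_kernel; auto_derive.
  pose proof (exp_pos (- (2 * s))); lra.
Qed.

Lemma is_RInt_exp_neg (c a b : R) : c <> 0 ->
  is_RInt (fun s => exp (- (c * s))) a b ((exp (- (c * a)) - exp (- (c * b))) / c).
Proof.
  intros hc.
  replace ((exp (- (c * a)) - exp (- (c * b))) / c)
    with (minus (- exp (- (c * b)) / c) (- exp (- (c * a)) / c))
    by (unfold minus, plus, opp; cbn; field; exact hc).
  apply (is_RInt_derive (fun s => - exp (- (c * s)) / c)).
  - intros s _; auto_derive; [exact I|field; exact hc].
  - intros s _; apply (ex_derive_continuous (fun s => exp (- (c * s)))); auto_derive; exact I.
Qed.

Lemma is_lim_neg_scal_p_infty (c : R) : 0 < c ->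
  is_lim (fun b => - (c * b)) p_infty m_infty.
Proof.
  intros hc; apply is_lim_spec; intros M; exists (- M / c); intros y hy.
  apply Rmult_lt_compat_l with (r := c) in hy; [|lra].
  field_simplify in hy; lra.
Qed.

Lemma is_lim_exp_neg (c : R) : 0 < c -> is_lim (fun b => exp (- (c * b))) p_infty 0.
Proof.
  intros hc.
  apply (is_lim_comp exp (fun b => - (c * b)) p_infty 0 m_infty);
    [exact is_lim_exp_m|apply is_lim_neg_scal_p_infty, hc|].
  exists 0; intros y _; discriminate.
Qed.

Lemma ex_RInt_of_continuous (f : R -> R) :
  (forall s, continuous f s) -> forall a b, ex_RInt f a b.
Proof. intros hf a b; apply (ex_RInt_continuous (V := R_CompleteNormedModule)); auto. Qed.

Section ExpDominated.

Variables (f : R -> R) (c : R).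
Hypothesis c_pos : 0 < c.
Hypothesis f_cont : forall s, continuous f s.
Hypothesis f_dominated : forall s, 0 <= s -> Rabs (f s) <= exp (- (c * s)).

Lemma Rabs_RInt_exp_dominated_tail (u v : R) :
  0 <= u <= v -> Rabs (RInt f u v) <= exp (- (c * u)) / c.
Proof.
  intros huv.
  assert (Hexp := is_RInt_exp_neg c u v ltac:(lra)).
  apply Rle_trans with (RInt (fun s => Rabs (f s)) u v);
    [apply abs_RInt_le; [lra|apply ex_RInt_of_continuous, f_cont]|].
  apply Rle_trans with ((exp (- (c * u)) - exp (- (c * v))) / c).
  - rewrite <- (is_RInt_unique _ _ _ _ Hexp).
    apply RInt_le; [lra| |eexists; exact Hexp|].
    + apply ex_RInt_norm, ex_RInt_of_continuous, f_cont.
    + intros s hs; apply f_dominated; lra.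
  - pose proof (exp_pos (- (c * v))).
    unfold Rdiv; apply Rmult_le_compat_r; [apply Rlt_le, Rinv_0_lt_compat|]; lra.
Qed.

Lemma ex_lim_RInt_exp_dominated :
  exists l : R, is_lim (fun b => RInt f 0 b) p_infty l.
Proof.
  apply (filterlim_locally_cauchy (F := Rbar_locally' p_infty) (U := R_CompleteSpace)).
  intros eps.
  destruct (proj2 (is_lim_spec _ _ _) (is_lim_exp_neg c c_pos)
             (mkposreal (eps * c) (Rmult_lt_0_compat _ _ (cond_pos eps) c_pos)))
    as [M HM].
  exists (fun b => Rmax M 0 < b); split; [exists (Rmax M 0); auto|].
  assert (Htail : forall u v, Rmax M 0 < u <= v ->
            Rabs (RInt f 0 v - RInt f 0 u) < eps).
  { intros u v huv.
    assert (HM0 := Rmax_l M 0); assert (H00 := Rmax_r M 0).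
    assert (Hsplit : RInt f 0 v = RInt f 0 u + RInt f u v)
      by (symmetry; apply (RInt_Chasles f 0 u v); apply ex_RInt_of_continuous, f_cont).
    rewrite Hsplit.
    replace (RInt f 0 u + RInt f u v - RInt f 0 u) with (RInt f u v) by lra.
    eapply Rle_lt_trans; [apply Rabs_RInt_exp_dominated_tail; lra|].
    specialize (HM u ltac:(lra)); cbn in HM.
    rewrite Rminus_0_r, Rabs_right in HM by (apply Rle_ge, Rlt_le, exp_pos).
    apply Rmult_lt_reg_r with c; [exact c_pos|].
    unfold Rdiv; rewrite Rmult_assoc, Rinv_l by lra; lra. }
  intros u v hu hv.
  destruct (Rle_lt_dec u v) as [huv|huv].
  - exact (Htail u v ltac:(lra)).
  - change (Rabs (RInt f 0 v - RInt f 0 u) < eps).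
    rewrite Rabs_minus_sym; exact (Htail v u ltac:(lra)).
Qed.

End ExpDominated.

Lemma is_lim_finite_unique (f : R -> R) (x : Rbar) (l1 l2 : R) :
  is_lim f x l1 -> is_lim f x l2 -> l1 = l2.
Proof.
  intros H1 H2.
  apply Rbar_finite_eq; rewrite <- (is_lim_unique _ _ _ H1); exact (is_lim_unique _ _ _ H2).
Qed.

Lemma is_lim_RInt_exp_neg (c : R) : 0 < c ->
  is_lim (fun b => RInt (fun s => exp (- (c * s))) 0 b) p_infty (1 / c).
Proof.
  intros hc.
  apply (is_lim_ext (fun b => / c * (1 - exp (- (c * b))))).
  - intros b; rewrite (is_RInt_unique _ _ _ _ (is_RInt_exp_neg c 0 b ltac:(lra))).
    rewrite Rmult_0_r, Ropp_0, exp_0; field; lra.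
  - replace (1 / c) with (/ c * (1 - 0)) by (field; lra).
    apply (is_lim_scal_l _ (/ c) p_infty (1 - 0)).
    apply is_lim_minus'; [apply is_lim_const|apply is_lim_exp_neg, hc].
Qed.

(* Meaningful only for [x > 0]; elsewhere [real] of [Lim] is a junk value. *)
Definition beta_integral (x : R) : R :=
  real (Lim (fun b => RInt (beta_kernel x) 0 b) p_infty).

Lemma is_lim_beta_integral (x : R) : 0 < x ->
  is_lim (fun b => RInt (beta_kernel x) 0 b) p_infty (beta_integral x).
Proof.
  intros hx.
  destruct (ex_lim_RInt_exp_dominated (beta_kernel x) (2 * x) ltac:(lra)
              (continuous_beta_kernel x)) as [l Hl].
  { intros s _; pose proof (beta_kernel_bounds x s).
    rewrite Rabs_right by lra; lra. }
  unfold beta_integral; rewrite (is_lim_unique _ _ _ Hl); exact Hl.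
Qed.

Lemma beta_integral_shift (x : R) : 0 < x ->
  beta_integral x + beta_integral (x + 1) = 1 / (2 * x).
Proof.
  intros hx.
  apply (is_lim_finite_unique (fun b => RInt (fun s => exp (- (2 * x * s))) 0 b) p_infty).
  - apply (is_lim_ext (fun b => RInt (beta_kernel x) 0 b + RInt (beta_kernel (x + 1)) 0 b)).
    + intros b; rewrite <- (RInt_plus (V := R_CompleteNormedModule))
        by apply ex_RInt_of_continuous, continuous_beta_kernel.
      apply RInt_ext; intros s _; apply beta_kernel_shift.
    + apply is_lim_plus'; apply is_lim_beta_integral; lra.
  - apply is_lim_RInt_exp_neg; lra.
Qed.

Lemma beta_integral_bounds (x : R) : 0 < x -> 0 <= beta_integral x <= 1 / (2 * x).
Proof.
  intros hx.
  assert (Hlim := is_lim_beta_integral x hx).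
  assert (Hpos : forall b, 0 < b -> 0 <= RInt (beta_kernel x) 0 b).
  { intros b hb; apply RInt_ge_0; [lra|apply ex_RInt_of_continuous, continuous_beta_kernel|].
    intros s _; apply beta_kernel_bounds. }
  split.
  - apply (is_lim_le_loc (fun _ => 0) (fun b => RInt (beta_kernel x) 0 b) p_infty 0
             (beta_integral x));
      [exists 0; exact Hpos|apply is_lim_const|exact Hlim].
  - apply (is_lim_le_loc (fun b => RInt (beta_kernel x) 0 b)
             (fun b => RInt (fun s => exp (- (2 * x * s))) 0 b) p_infty
             (beta_integral x) (1 / (2 * x)));
      [exists 0; intros b hb|exact Hlim|apply is_lim_RInt_exp_neg; lra].
    apply RInt_le; [lra|apply ex_RInt_of_continuous, continuous_beta_kernel| |].
    + eexists; apply is_RInt_exp_neg; lra.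
    + intros s _; apply beta_kernel_bounds.
Qed.

Lemma beta_eq_integral (x : R) : 0 < x -> beta x = 2 * beta_integral x.
Proof.
  intros hx; apply (beta_unique (fun y => 2 * beta_integral y)); [exact hx| |].
  - intros y hy; rewrite <- Rmult_plus_distr_l, beta_integral_shift by exact hy.
    field; lra.
  - intros y hy; pose proof (beta_integral_bounds y hy).
    rewrite Rabs_right by lra.
    replace (1 / y) with (2 * (1 / (2 * y))) by (field; lra); lra.
Qed.

Lemma beta_shift (s : R) : 0 < s -> beta s + beta (s + 1) = 1 / s.
Proof.
  intros hs; rewrite !beta_eq_integral by lra.
  rewrite <- Rmult_plus_distr_l, beta_integral_shift by exact hs; field; lra.
Qed.

Lemma is_derive_ln_cosh (s : R) :
  is_derive (fun s => ln (cosh s)) s (1 - 2 * beta_kernel 1 s).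
Proof.
  unfold cosh, beta_kernel.
  assert (Hs := exp_pos s); assert (Hms := exp_pos (- s)).
  auto_derive; [lra|].
  replace (- (2 * 1 * s)) with (- s + - s) by ring.
  replace (- (2 * s)) with (- s + - s) by ring.
  rewrite exp_plus, exp_Ropp; field; split; nra.
Qed.

Lemma ln_cosh_bounds (b : R) : 0 <= b -> 0 <= ln (cosh b) <= b.
Proof.
  intros hb; unfold cosh.
  assert (Hu : 1 <= exp b) by (pose proof (exp_ineq1_le b); lra).
  assert (Hv := exp_pos (- b)).
  assert (Huv : exp b * exp (- b) = 1) by (rewrite <- exp_plus, Rplus_opp_r; apply exp_0).
  split.
  - rewrite <- ln_1; apply ln_le; [lra|nra].
  - rewrite <- (ln_exp b) at 3; apply ln_le; nra.
Qed.

Lemma is_lim_mul_exp_neg (t : R) : 0 < t ->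
  is_lim (fun b => b * exp (- (t * b))) p_infty 0.
Proof.
  intros ht.
  apply (is_lim_ext (fun b => - / t * (- (t * b) * exp (- (t * b))))).
  { intros b; field; lra. }
  replace 0 with (- / t * 0) by ring.
  apply (is_lim_scal_l _ (- / t) p_infty 0).
  apply (is_lim_comp (fun y => y * exp y) (fun b => - (t * b)) p_infty 0 m_infty);
    [exact is_lim_mul_exp_m|apply is_lim_neg_scal_p_infty, ht|].
  exists 0; intros y _; discriminate.
Qed.

Lemma is_lim_exp_neg_mul_ln_cosh (t : R) : 0 < t ->
  is_lim (fun b => exp (- (t * b)) * ln (cosh b)) p_infty 0.
Proof.
  intros ht.
  apply (is_lim_le_le_loc (fun _ => 0) (fun b => b * exp (- (t * b))));
    [exists 0; intros b hb|apply is_lim_const|apply is_lim_mul_exp_neg, ht].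
  pose proof (ln_cosh_bounds b ltac:(lra)); pose proof (exp_pos (- (t * b))).
  split; nra.
Qed.

Lemma continuous_ln_cosh_mul_exp (t s : R) :
  continuous (fun s => ln (cosh s) * exp (- (t * s))) s.
Proof.
  apply (continuous_mult (fun s => ln (cosh s)) (fun s => exp (- (t * s)))).
  - apply (ex_derive_continuous (fun s => ln (cosh s))).
    eexists; apply is_derive_ln_cosh.
  - apply (ex_derive_continuous (fun s => exp (- (t * s)))); auto_derive; exact I.
Qed.

Lemma RInt_ln_cosh_mul_exp (t b : R) : 0 < t ->
  RInt (fun s => ln (cosh s) * exp (- (t * s))) 0 b =
  / t * (- (exp (- (t * b)) * ln (cosh b)) + / t * (1 - exp (- (t * b)))
         - 2 * RInt (beta_kernel (t / 2 + 1)) 0 b).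
Proof.
  intros ht.
  set (J := fun b => RInt (beta_kernel (t / 2 + 1)) 0 b).
  set (P := fun b => / t * (- (exp (- (t * b)) * ln (cosh b)) + / t * (1 - exp (- (t * b)))
                            - 2 * J b)).
  assert (HJ : forall s, is_derive J s (beta_kernel (t / 2 + 1) s)).
  { intros s; apply (is_derive_RInt (V := R_NormedModule) _ J 0);
      [|apply continuous_beta_kernel].
    exists (mkposreal 1 Rlt_0_1); intros y _.
    apply (RInt_correct (V := R_CompleteNormedModule)).
    apply ex_RInt_of_continuous, continuous_beta_kernel. }
  assert (HP : forall s, is_derive P s (ln (cosh s) * exp (- (t * s)))).
  { intros s.
    assert (Hparts : forall (L : R -> R) (l k : R), is_derive L s l -> is_derive J s k ->
      is_derive (fun b => / t * (- (exp (- (t * b)) * L b) + / t * (1 - exp (- (t * b)))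
                                 - 2 * J b)) s
                (/ t * (t * exp (- (t * s)) * L s + exp (- (t * s)) * (1 - l) - 2 * k))).
    { intros L l k HL HJk; auto_derive.
      - split; [eexists; exact HL|split; [eexists; exact HJk|exact I]].
      - replace (Derive (fun x => L x) s) with l by (symmetry; apply is_derive_unique, HL).
        replace (Derive (fun x => J x) s) with k by (symmetry; apply is_derive_unique, HJk).
        field; lra. }
    specialize (Hparts (fun s => ln (cosh s)) _ _ (is_derive_ln_cosh s) (HJ s)).
    (* [exp (-ts) * beta_kernel 1 s = beta_kernel (t/2+1) s] cancels the tanh term. *)
    rewrite <- (beta_kernel_mul_exp 1 (t / 2) s) in Hparts.
    replace (2 * (t / 2) * s) with (t * s) in Hparts by field.
    replace (ln (cosh s) * exp (- (t * s))) with
      (/ t * (t * exp (- (t * s)) * ln (cosh s)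
              + exp (- (t * s)) * (1 - (1 - 2 * beta_kernel 1 s))
              - 2 * (exp (- (t * s)) * beta_kernel 1 s))) by (field; lra).
    exact Hparts. }
  assert (HP0 : P 0 = 0).
  { unfold P, J; rewrite RInt_point, Rmult_0_r, Ropp_0, exp_0, cosh_0, ln_1.
    cbn; ring. }
  rewrite (is_RInt_unique _ _ _ _
             (is_RInt_derive P _ 0 b (fun s _ => HP s)
                (fun s _ => continuous_ln_cosh_mul_exp t s))).
  fold (P b); rewrite HP0; cbn; ring.
Qed.

Lemma is_lim_RInt_ln_cosh_mul_exp (t : R) : 0 < t ->
  is_lim (fun b => RInt (fun s => ln (cosh s) * exp (- (t * s))) 0 b) p_infty
         (/ t * (/ t - beta (t / 2 + 1))).
Proof.
  intros ht.
  apply (is_lim_ext_loc (fun b => / t * (- (exp (- (t * b)) * ln (cosh b))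
                                           + / t * (1 - exp (- (t * b)))
                                           - 2 * RInt (beta_kernel (t / 2 + 1)) 0 b))).
  { exists 0; intros b _; symmetry; apply RInt_ln_cosh_mul_exp, ht. }
  rewrite beta_eq_integral by lra.
  replace (/ t - 2 * beta_integral (t / 2 + 1))
    with (- 0 + / t * (1 - 0) - 2 * beta_integral (t / 2 + 1)) by ring.
  apply (is_lim_scal_l _ (/ t) p_infty (Finite _)).
  apply is_lim_minus'; [apply is_lim_plus'|].
  - apply (is_lim_opp _ p_infty 0), is_lim_exp_neg_mul_ln_cosh, ht.
  - apply (is_lim_scal_l _ (/ t) p_infty (Finite (1 - 0))).
    apply is_lim_minus'; [apply is_lim_const|apply is_lim_exp_neg, ht].
  - apply (is_lim_scal_l _ 2 p_infty (Finite _)), is_lim_beta_integral; lra.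
Qed.

Lemma improper_integral_0_inf_is_lim (f : R -> R) (l : R) :
  (forall s, continuous f s) -> is_lim (fun b => RInt f 0 b) p_infty l ->
  improper_integral_0_inf f l.
Proof.
  intros hf hl.
  exists (fun b => ex_RInt_Reals_0 _ _ _ (ex_RInt_of_continuous f hf 0 b)).
  intros eps heps.
  destruct (proj2 (is_lim_spec _ _ _) hl (mkposreal eps heps)) as [M HM].
  exists (M + 1); intros b hb.
  rewrite <- RInt_Reals; apply HM; lra.
Qed.

Theorem corollary2 :
  (forall t : R, 0 < t ->
     exists L : R,
       improper_integral_0_inf (fun s => ln (cosh s) * exp (- (t * s))) L /\
       - (t ^ 2) * L = 1 - t * beta (t / 2) /\
       - (t ^ 2) * L = t * beta (t / 2 + 1) - 1) /\
  (forall s : R, 0 < s -> beta s + beta (s + 1) = 1 / s).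
Proof.
  split; [|exact beta_shift].
  intros t ht.
  exists (/ t * (/ t - beta (t / 2 + 1))).
  split; [|split].
  - apply improper_integral_0_inf_is_lim;
      [apply continuous_ln_cosh_mul_exp|apply is_lim_RInt_ln_cosh_mul_exp, ht].
  - assert (Hshift := beta_shift (t / 2) ltac:(lra)).
    replace (beta (t / 2)) with (1 / (t / 2) - beta (t / 2 + 1)) by lra.
    field; lra.
  - field; lra.
Qed.
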